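(* Let $X\in\mathrm{St}(n,k)$ be fixed, $\widehat\beta\colon I\to\mathrm{St}(n,k)$ a curve and $\widehat Z$ a normal vector field along $\widehat\beta$ (i.e. $\widehat Z(t)\in N_{\widehat\beta(t)}\mathrm{St}(n,k)$). Let $q=(R,\theta)\colon I\to O(n)\times O(k)$ be a horizontal lift of $\widehat\beta$. Then $\widehat Z$ is normal parallel along $\widehat\beta$ if and only if $z^\perp(t)=R(t)^\top\widehat Z(t)\theta(t)\in N_X\mathrm{St}(n,k)$ satisfies $$\dot z^\perp(t)=-\big(P_X^\perp\circ f_{(\xi_1(t),\xi_2(t))}\big)(z^\perp(t)),\quad t\in I,$$ where $(\xi_1(t),\xi_2(t))=(R(t)^\top\dot R(t),\theta(t)^\top\dot\theta(t))$.
   Context: $\mathrm{St}(n,k)=\{Y\in\mathbb{R}^{n\times k}:Y^\top Y=I_k\}$ with metric $2\operatorname{tr}(V^\top W)$; $T_Y\mathrm{St}(n,k)=\{V:Y^\top V+V^\top Y=0\}$, $N_Y\mathrm{St}(n,k)$ its Frobenius-orthogonal complement, $P_Y^\perp(V)=\tfrac12Y(Y^\top V+V^\top Y)$ the orthogonal projection onto $N_Y\mathrm{St}(n,k)$. A normal field $\widehat Z$ along $\widehat\beta$ is normal parallel if $P^\perp_{\widehat\beta(t)}\big(\tfrac{d}{dt}\widehat Z(t)\big)=0$ for all $t$. $f_{(\xi_1,\xi_2)}(V)=\xi_1V-V\xi_2$. Horizontal lift: $R(t)X\theta(t)^\top=\widehat\beta(t)$ and $(R^\top\dot R,\theta^\top\dot\theta)\in\mathfrak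 p$, where $\mathfrak p$ is the orthogonal complement in $\mathfrak{so}(n)\times\mathfrak{so}(k)$ of $\mathfrak h=\{(\Omega,\eta):\Omega X=X\eta\}$ with respect to $\langle(\Omega_1,\Psi_1),(\Omega_2,\Psi_2)\rangle=-\operatorname{tr}(\Omega_1\Omega_2)+2\operatorname{tr}(\Psi_1\Psi_2)$. *)

From HB Require Import structures.
From mathcomp Require Import all_boot all_order all_algebra.
From mathcomp Require Import all_classical all_reals all_analysis.
Set Implicit Arguments. Unset Strict Implicit. Unset Printing Implicit Defensive.
Import Order.TTheory GRing.Theory Num.Theory.
Local Open Scope ring_scope.

Section StiefelDefs.
Variable R : realType.

Definition mx_derivable m n (A : R -> 'M[R]_(m, n)) (t : R) : Prop :=
  forall i j, derivable (fun s => A s i j) t 1.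

Definition mx_deriv m n (A : R -> 'M[R]_(m, n)) (t : R) : 'M[R]_(m, n) :=
  \matrix_(i, j) (derive1 (fun s => A s i j) t).

Definition stiefel n k (Y : 'M[R]_(n, k)) : Prop := Y^T *m Y = 1%:M.

Definition orthogonal n (Q : 'M[R]_n) : Prop := Q^T *m Q = 1%:M.

Definition skew n (A : 'M[R]_n) : Prop := A^T = - A.

Definition tangent n k (Y V : 'M[R]_(n, k)) : Prop :=
  Y^T *m V + V^T *m Y = 0.

Definition normal n k (Y V : 'M[R]_(n, k)) : Prop :=
  forall W, tangent Y W -> \tr (V^T *m W) = 0.

(* orthogonal projection onto the normal space *)
Definition Pperp n k (Y V : 'M[R]_(n, k)) : 'M[R]_(n, k) :=
  (2%:R)^-1 *: (Y *m (Y^T *m V + V^T *m Y)).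

Definition fxi n k (xi1 : 'M[R]_n) (xi2 : 'M[R]_k) (V : 'M[R]_(n, k)) :=
  xi1 *m V - V *m xi2.

Definition in_h n k (X : 'M[R]_(n, k)) (Om : 'M[R]_n) (eta : 'M[R]_k) :=
  skew Om /\ skew eta /\ Om *m X = X *m eta.

Definition in_p n k (X : 'M[R]_(n, k)) (Om : 'M[R]_n) (Psi : 'M[R]_k) :=
  skew Om /\ skew Psi /\
  forall Om' eta, in_h X Om' eta ->
    - \tr (Om *m Om') + 2%:R * \tr (Psi *m eta) = 0.

Definition horizontal_lift n k (I : set R) (X : 'M[R]_(n, k))
  (beta : R -> 'M[R]_(n, k)) (Q : R -> 'M[R]_n) (th : R -> 'M[R]_k) :=
  forall t, I t ->
    [/\ orthogonal (Q t) /\ orthogonal (th t),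
        mx_derivable Q t, mx_derivable th t,
        Q t *m X *m (th t)^T = beta t &
        in_p X ((Q t)^T *m mx_deriv Q t) ((th t)^T *m mx_deriv th t)].

Definition normal_parallel n k (I : set R) (beta Z : R -> 'M[R]_(n, k)) :=
  forall t, I t -> Pperp (beta t) (mx_deriv Z t) = 0.

End StiefelDefs.

From Pilot Require Import Defs.
From HB Require Import structures.
From mathcomp Require Import all_boot all_order all_algebra.
From mathcomp Require Import all_classical all_reals all_analysis.
Import Order.TTheory GRing.Theory Num.Theory.
Local Open Scope ring_scope.
Set Implicit Arguments.
Unset Strict Implicit.
Unset Printing Implicit Defensive.
Import numFieldNormedType.Exports.
(* [orthogonal] and [skew] are also names in sesquilinear.v. *)
Import Defs.

(* Write z := Q^T Z th for the field seen in the body frame, and xi1 := Q^T Q',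
   xi2 := th^T th'.  Differentiating z, the skewness of xi1 (the only part of
   horizontality that is used) and th th^T = 1 give
     z' = - f_(xi1, xi2) z + Q^T Z' th.
   Since z takes values in the fixed normal space N_X and P_X is linear, z' is
   normal at X as well, so applying P_X and the equivariance
   P_X (Q^T W th) = Q^T P_beta(W) th of the projection yields
     z' = - P_X (f_(xi1, xi2) z) + Q^T P_beta(Z') th,
   whose last term vanishes exactly when Z is normal parallel. *)

Section MatrixCurves.
Variable R : realType.
Implicit Types (t : R).

Definition mx_is_deriv m n (A : R -> 'M[R]_(m, n)) t (D : 'M[R]_(m, n)) :=
  forall i j, is_derive t 1 (fun s => A s i j) (D i j).

Lemma mx_derivableP m n (A : R -> 'M[R]_(m, n)) t :
  mx_derivable A t -> mx_is_deriv A t (mx_deriv A t).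
Proof. by move=> dA i j; rewrite mxE derive1E; apply: DeriveDef. Qed.

Lemma mx_is_derivE m n (A : R -> 'M[R]_(m, n)) t D :
  mx_is_deriv A t D -> mx_deriv A t = D.
Proof.
by move=> dA; apply/matrixP=> i j; rewrite mxE derive1E; case: (dA i j).
Qed.

Lemma mx_is_derivT m n (A : R -> 'M[R]_(m, n)) t D :
  mx_is_deriv A t D -> mx_is_deriv (fun s => (A s)^T) t D^T.
Proof.
move=> dA i j; rewrite mxE.
by under eq_fun do rewrite mxE.
Qed.

Lemma mx_is_derivM m n p (A : R -> 'M[R]_(m, n)) (B : R -> 'M[R]_(n, p))
    t DA DB :
  mx_is_deriv A t DA -> mx_is_deriv B t DB ->
  mx_is_deriv (fun s => A s *m B s) t (DA *m B t + A t *m DB).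
Proof.
move=> dA dB i j.
have -> : (fun s => (A s *m B s) i j) =
          \sum_l ((fun s => A s i l) * (fun s => B s l j))%R.
  by apply/funext=> s; rewrite fct_sumE !mxE.
apply: (is_derive_eq (is_derive_sum (fun l => is_deriveM (dA i l) (dB l j)))).
rewrite !mxE -big_split /=; apply: eq_bigr => l _.
by rewrite addrC [_ *: DA i l]mulrC.
Qed.

Lemma mx_is_deriv_linear m n p q (f : {linear 'M[R]_(m, n) -> 'M[R]_(p, q)})
    (A : R -> 'M[R]_(m, n)) t D :
  mx_is_deriv A t D -> mx_is_deriv (fun s => f (A s)) t (f D).
Proof.
have coordE (V : 'M[R]_(m, n)) i j :
    f V i j = \sum_k \sum_l V k l * f (delta_mx k l) i j.
  rewrite [in LHS](matrix_sum_delta V) linear_sum summxE; apply: eq_bigr => k _.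
  by rewrite linear_sum summxE; apply: eq_bigr => l _; rewrite linearZ mxE.
move=> dA i j.
have -> : (fun s => f (A s) i j) =
          \sum_k \sum_l (f (delta_mx k l) i j \*: (fun s => A s k l))%R.
  apply/funext=> s; rewrite coordE fct_sumE; apply: eq_bigr => k _.
  by rewrite fct_sumE; apply: eq_bigr => l _; rewrite mulrC.
apply: (is_derive_eq (is_derive_sum (fun k =>
  is_derive_sum (fun l => is_deriveZ (f (delta_mx k l) i j) (dA k l))))).
rewrite coordE; apply: eq_bigr => k _; apply: eq_bigr => l _.
by rewrite mulrC.
Qed.

Lemma mx_is_deriv_near m n (A B : R -> 'M[R]_(m, n)) t D :
  (\forall s \near t, A s = B s) -> mx_is_deriv A t D -> mx_is_deriv B t D.
Proof.
move=> AB dA i j; apply: near_eq_is_derive (dA i j).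
by near=> s; rewrite (near AB s).
Unshelve. all: by end_near. Qed.

End MatrixCurves.

Lemma mxtrace_sym_skew (R : numDomainType) n (S K : 'M[R]_n) :
  S^T = S -> K^T = - K -> \tr (S *m K) = 0.
Proof.
move=> symS skK; suff : \tr (S *m K) *+ 2 == 0 by rewrite mulrn_eq0 => /eqP.
apply/eqP; rewrite mulr2n -{1}mxtrace_tr trmx_mul skK symS mulNmx mxtrace_mulC.
by rewrite -mxtraceD addNr mxtrace0.
Qed.

Lemma mxtrace_mulTmx_eq0 (R : realDomainType) m n (W : 'M[R]_(m, n)) :
  \tr (W^T *m W) = 0 -> W = 0.
Proof.
have sumE : \tr (W^T *m W) = \sum_j \sum_i W i j ^+ 2.
  apply: eq_bigr => j _; rewrite mxE.
  by apply: eq_bigr => i _; rewrite mxE expr2.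
rewrite sumE => /eqP; rewrite psumr_eq0 => [/allP colW|j _]; last first.
  by rewrite sumr_ge0 // => i _; rewrite sqr_ge0.
apply/matrixP=> i j; move/implyP: (colW j (mem_index_enum j)) => /(_ isT).
rewrite psumr_eq0 => [/allP/(_ i (mem_index_enum i))|i' _]; last exact: sqr_ge0.
by rewrite sqrf_eq0 mxE => /eqP.
Qed.

Section StiefelNormalSpace.
Variables (R : realType) (n k : nat).
Implicit Types (Y V W : 'M[R]_(n, k)) (Q : 'M[R]_n) (th : 'M[R]_k).

Lemma Pperp_is_linear Y : linear (Pperp Y).
Proof.
move=> c V W; rewrite /Pperp scalerA mulrC -scalerA -scalerDr; congr (_ *: _).
rewrite scalemxAr -mulmxDr; congr (_ *m _).
rewrite mulmxDr -scalemxAr [(_ + _)^T]linearD /= [(_ *: _)^T]linearZ /=.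
by rewrite mulmxDl -scalemxAl scalerDr addrACA.
Qed.

HB.instance Definition _ Y :=
  GRing.isLinear.Build R 'M[R]_(n, k) 'M[R]_(n, k) _ (Pperp Y)
    (Pperp_is_linear Y).

Lemma tangentE Y W : tangent Y W <-> skew (Y^T *m W).
Proof.
rewrite /tangent /skew trmx_mul trmxK addrC.
by split=> [/eqP|->]; [rewrite addr_eq0 => /eqP | rewrite addNr].
Qed.

Lemma normal_Pperp Y V : normal Y (Pperp Y V).
Proof.
move=> W /tangentE skYW; rewrite /Pperp; set S := Y^T *m V + V^T *m Y.
have symS : S^T = S by rewrite linearD /= !trmx_mul !trmxK addrC.
rewrite linearZ /= -scalemxAl mxtraceZ trmx_mul symS -mulmxA.
by rewrite mxtrace_sym_skew ?mulr0.
Qed.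

Lemma tangent_subr_Pperp Y V : stiefel Y -> tangent Y (V - Pperp Y V).
Proof.
move=> stY; apply/tangentE; rewrite /Pperp; set S := Y^T *m V + V^T *m Y.
rewrite mulmxBr -scalemxAr mulmxA stY mul1mx /skew linearB linearZ /=.
rewrite trmx_mul trmxK linearD /= !trmx_mul !trmxK [_ + Y^T *m V]addrC -/S.
have halfD : (2%:R : R)^-1 + 2%:R^-1 = 1 by rewrite [RHS](splitr 1) !mul1r.
apply/eqP; rewrite opprB subr_eq addrAC -scalerDl halfD scale1r.
by rewrite /S addrC addKr.
Qed.

Lemma Pperp_id Y V : stiefel Y -> normal Y V -> Pperp Y V = V.
Proof.
move=> stY nV; set W := V - Pperp Y V.
have tW : tangent Y W by exact: tangent_subr_Pperp.
suff /mxtrace_mulTmx_eq0/eqP : \tr (W^T *m W) = 0.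
  by rewrite subr_eq0 eq_sym => /eqP.
by rewrite {1}/W [_^T]linearB /= mulmxBl linearB /= nV // normal_Pperp // subrr.
Qed.

Lemma normal_conj Q th X V : orthogonal Q -> orthogonal th ->
  normal (Q *m X *m th^T) V -> normal X (Q^T *m V *m th).
Proof.
move=> oQ oth nV W tW.
have tQWth : tangent (Q *m X *m th^T) (Q *m W *m th^T).
  rewrite /tangent !trmx_mul !trmxK !mulmxA -!(mulmxA _ Q^T Q) oQ !mulmx1.
  by rewrite -mulmxDl -!mulmxA -mulmxDr tW mulmx0 mul0mx.
by rewrite !trmx_mul trmxK -mulmxA mxtrace_mulC -(nV _ tQWth) !mulmxA.
Qed.

Lemma Pperp_conj Q th X W : orthogonal Q -> orthogonal th ->
  Pperp X (Q^T *m W *m th) = Q^T *m Pperp (Q *m X *m th^T) W *m th.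
Proof.
move=> oQ oth; rewrite /Pperp -scalemxAr -scalemxAl; congr (_ *: _).
rewrite !trmx_mul !trmxK !mulmxDr !mulmxDl !mulmxA oQ !mul1mx.
by rewrite -!(mulmxA _ th^T th) oth !mulmx1.
Qed.

Lemma conj_orthogonal_eq0 Q th W : orthogonal Q -> orthogonal th ->
  Q^T *m W *m th = 0 -> W = 0.
Proof.
move=> /mulmx1C QQT /mulmx1C thT W0.
have -> : W = Q *m (Q^T *m W *m th) *m th^T.
  by rewrite !mulmxA QQT mul1mx -mulmxA thT mulmx1.
by rewrite W0 mulmx0 mul0mx.
Qed.

End StiefelNormalSpace.

Section BodyFrame.
Variables (R : realType) (n k : nat).

Lemma mx_is_deriv_conj (Q : R -> 'M[R]_n) (th : R -> 'M[R]_k)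
    (Z : R -> 'M[R]_(n, k)) t :
  orthogonal (Q t) -> orthogonal (th t) -> skew ((Q t)^T *m mx_deriv Q t) ->
  mx_derivable Q t -> mx_derivable th t -> mx_derivable Z t ->
  mx_is_deriv (fun s => (Q s)^T *m Z s *m th s) t
    (- fxi ((Q t)^T *m mx_deriv Q t) ((th t)^T *m mx_deriv th t)
           ((Q t)^T *m Z t *m th t)
     + (Q t)^T *m mx_deriv Z t *m th t).
Proof.
move=> oQ /mulmx1C thT skQ /mx_derivableP dQ /mx_derivableP dth.
move=> /mx_derivableP dZ.
have QT' : (Q t)^T *m mx_deriv Q t *m (Q t)^T = - (mx_deriv Q t)^T.
  rewrite -[_ *m mx_deriv Q t]opprK -skQ mulNmx trmx_mul trmxK -mulmxA.
  by rewrite (mulmx1C oQ) mulmx1.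
rewrite /fxi !mulmxA QT' -(mulmxA _ (th t)) thT mulmx1 !mulNmx opprB opprK.
rewrite -addrA addrC -mulmxDl.
exact: mx_is_derivM (mx_is_derivM (mx_is_derivT dQ) dZ) dth.
Qed.

Lemma Pperp_deriv_normal_curve (X : 'M[R]_(n, k)) (z : R -> 'M[R]_(n, k)) t D :
  stiefel X -> (\forall s \near t, normal X (z s)) -> mx_is_deriv z t D ->
  Pperp X D = D.
Proof.
move=> stX nz dz.
have dPz := mx_is_deriv_linear (Pperp X) dz.
have zPz : \forall s \near t, Pperp X (z s) = z s.
  by apply: filterS nz => s; exact: Pperp_id.
by rewrite -(mx_is_derivE (mx_is_deriv_near zPz dPz)) (mx_is_derivE dz).
Qed.

End BodyFrame.

Theorem lemma5p9 (R : realType) (n k : nat) (a b : R) (X : 'M[R]_(n, k))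
  (beta Z : R -> 'M[R]_(n, k)) (Q : R -> 'M[R]_n) (th : R -> 'M[R]_k) :
  (a < b)%R ->
  stiefel X ->
  (forall t, `]a, b[%classic t ->
     [/\ stiefel (beta t), mx_derivable beta t,
         mx_derivable Z t & normal (beta t) (Z t)]) ->
  horizontal_lift `]a, b[%classic X beta Q th ->
  normal_parallel `]a, b[%classic beta Z <->
  (forall t, `]a, b[%classic t ->
     mx_deriv (fun s => (Q s)^T *m Z s *m th s) t =
     - Pperp X (fxi ((Q t)^T *m mx_deriv Q t) ((th t)^T *m mx_deriv th t)
                    ((Q t)^T *m Z t *m th t))).
Proof.
move=> _ stX Hcurve Hlift.
have body_eq t : `]a, b[%classic t ->
    mx_deriv (fun s => (Q s)^T *m Z s *m th s) t =
    - Pperp X (fxi ((Q t)^T *m mx_deriv Q t) ((th t)^T *m mx_deriv th t)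
                   ((Q t)^T *m Z t *m th t))
    + (Q t)^T *m Pperp (beta t) (mx_deriv Z t) *m th t.
  move=> It; have [_ _ dZ _] := Hcurve t It.
  have [[oQ oth] dQ dth _ [skQ _]] := Hlift t It.
  have dz := mx_is_deriv_conj oQ oth skQ dQ dth dZ.
  have nz : \forall s \near t, normal X ((Q s)^T *m Z s *m th s).
    apply: filterS (near_in_itvoo It) => s Is.
    have [_ _ _ nZ] := Hcurve s Is; have [[oQs oths] _ _ eb _] := Hlift s Is.
    by apply: normal_conj; rewrite // eb.
  have [_ _ _ <- _] := Hlift t It.
  rewrite (mx_is_derivE dz) -(Pperp_deriv_normal_curve stX nz dz).
  by rewrite linearD linearN -Pperp_conj.
split=> [NP t It | Hz t It].
  by rewrite body_eq // NP // mulmx0 mul0mx addr0.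
have [[oQ oth] _ _ _ _] := Hlift t It.
apply: (conj_orthogonal_eq0 oQ oth).
by move/esym/eqP: (body_eq t It); rewrite Hz // addrC -subr_eq0 addrK => /eqP.
Qed.
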